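(* Let $A\in\mathbb{R}^{n\times n}$ and $B\in\mathbb{R}^{n\times m}$ define the discrete-time system $x^+=Ax+Bu$. Let $\mathrm{S}\in\mathbb{R}^{n_s\times n}$ be such that $\mathcal{S}:=\{x\in\mathbb{R}^n:\mathrm{S}x\le \mathbf{1}\}$ is a C-set, and let $\mathrm{U}\in\mathbb{R}^{n_u\times m}$ be such that $\mathcal{U}:=\{u\in\mathbb{R}^m:\mathrm{U}u\le\mathbf{1}\}$ (a polyhedral convex set containing the origin in its interior). Let $u_d(0),\dots,u_d(T-1)$ be an input sequence and $x_d(0),\dots,x_d(T)$ the corresponding states with $x_d(k+1)=Ax_d(k)+Bu_d(k)$, and set $U_{0,T}:=[u_d(0)\ \cdots\ u_d(T-1)]$, $X_{0,T}:=[x_d(0)\ \cdots\ x_d(T-1)]$, $X_{1,T}:=[x_d(1)\ \cdots\ x_d(T)]$. If there exist $\lambda\in\mathbb{R}$, $G_K\in\mathbb{R}^{T\times n}$ and $P\in\mathbb{R}^{n_s\times n_s}$ with $P\ge0$ solving the problem of minimizing $\lambda$ subject to $0\le\lambda<1$, $P\mathbf{1}\le\lambda\mathbf{1}$, $P\mathrm{S}=\mathrm{S}X_{1,T}G_K$, $\mathrm{U}U_{0,T}G_Ks\le\mathbf{1}$ for all vertices $s$ of $\mathcal{S}$, and $I_n=X_{0,T}G_K$, then the controller $K=U_{0,T}G_K$ ensures that $\mathcal{S}$ is $\lambda$-contractive for $x^+=(A+BK)x$ and admissible for $\mathcal{U}$.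
   Context: $\mathbf{1}$ denotes the vector of all ones of appropriate dimension; inequalities between vectors/matrices are entrywise. A C-set is a convex compact subset of $\mathbb{R}^n$ containing the origin as an interior point. For $\mu\ge0$, $\mu\mathcal{S}:=\{\mu x:x\in\mathcal{S}\}$. A C-set $\mathcal{S}$ is $\lambda$-contractive for $x^+=Fx$ (with $\lambda\in[0,1)$) if for each $x\in\mathcal{S}$, $\inf\{\lambda'\ge0: Fx\in\lambda'\mathcal{S}\}\le\lambda$. $\mathcal{S}$ is admissible for $\mathcal{U}$ (with gain $K$) if $Kx\in\mathcal{U}$ for every $x\in\mathcal{S}$. *)

From HB Require Import structures.
From mathcomp Require Import all_boot all_order all_algebra.
From mathcomp Require Import all_classical all_reals.
From mathcomp Require Import topology normedtype matrix_topology matrix_normedtype.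
Import numFieldNormedType.Exports.
Set Implicit Arguments. Unset Strict Implicit. Unset Printing Implicit Defensive.
Import Order.TTheory GRing.Theory Num.Theory.
Local Open Scope classical_set_scope.
Local Open Scope ring_scope.

Definition mxle (R : realType) (p q : nat) (M N : 'M[R]_(p, q)) : Prop :=
  forall i j, M i j <= N i j.

Definition ones (R : realType) (p : nat) : 'cV[R]_p := const_mx 1.

Definition polyset (R : realType) (p q : nat) (M : 'M[R]_(p, q)) : set 'cV[R]_q :=
  [set x | mxle (M *m x) (ones R p)].

Definition convexS (R : realType) (n : nat) (S : set 'cV[R]_n) : Prop :=
  forall x y t, S x -> S y -> 0 <= t <= 1 -> S (t *: x + (1 - t) *: y).

Definition Cset (R : realType) (n : nat) (S : set 'cV[R]_n) : Prop :=
  convexS S /\ compact S /\ interior S 0.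

Definition scale_set (R : realType) (n : nat) (mu : R) (S : set 'cV[R]_n)
  : set 'cV[R]_n := [set mu *: y | y in S].

Definition contractive (R : realType) (n : nat) (S : set 'cV[R]_n)
    (F : 'M[R]_n) (lam : R) : Prop :=
  0 <= lam < 1 /\
  forall x, S x -> inf [set l : R | 0 <= l /\ scale_set l S (F *m x)] <= lam.

Definition admissible (R : realType) (n m : nat) (S : set 'cV[R]_n)
    (U : set 'cV[R]_m) (K : 'M[R]_(m, n)) : Prop :=
  forall x, S x -> U (K *m x).

Definition is_vertex (R : realType) (n : nat) (S : set 'cV[R]_n) (x : 'cV[R]_n)
  : Prop :=
  S x /\ forall y z t, S y -> S z -> 0 < t < 1 ->
    x = t *: y + (1 - t) *: z -> y = z.

Definition data_mx (R : realType) (p T : nat) (v : nat -> 'cV[R]_p) (off : nat)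
  : 'M[R]_(p, T) := \matrix_(i < p, j < T) v (j + off)%N i ord0.

Definition lp_feasible (R : realType) (n m ns nu T : nat)
    (Sm : 'M[R]_(ns, n)) (Um : 'M[R]_(nu, m))
    (U0 : 'M[R]_(m, T)) (X0 X1 : 'M[R]_(n, T))
    (lam : R) (GK : 'M[R]_(T, n)) (P : 'M[R]_ns) : Prop :=
  0 <= lam < 1 /\
  mxle (0 : 'M[R]_ns) P /\
  mxle (P *m ones R ns) (lam *: ones R ns) /\
  P *m Sm = Sm *m X1 *m GK /\
  (forall s, is_vertex (polyset Sm) s -> mxle (Um *m U0 *m GK *m s) (ones R nu)) /\
  (1%:M : 'M[R]_n) = X0 *m GK.

Definition lp_optimal (R : realType) (n m ns nu T : nat)
    (Sm : 'M[R]_(ns, n)) (Um : 'M[R]_(nu, m))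
    (U0 : 'M[R]_(m, T)) (X0 X1 : 'M[R]_(n, T))
    (lam : R) (GK : 'M[R]_(T, n)) (P : 'M[R]_ns) : Prop :=
  lp_feasible Sm Um U0 X0 X1 lam GK P /\
  forall lam' GK' P', lp_feasible Sm Um U0 X0 X1 lam' GK' P' -> lam <= lam'.

From HB Require Import structures.
From mathcomp Require Import all_boot all_order all_algebra.
From mathcomp Require Import all_classical all_reals.
From mathcomp Require Import topology normedtype matrix_topology matrix_normedtype.
From mathcomp Require Import derive ring lra.
Import numFieldNormedType.Exports.

Set Implicit Arguments.
Unset Strict Implicit.
Unset Printing Implicit Defensive.
Import Order.TTheory GRing.Theory Num.Theory.
Local Open Scope classical_set_scope.
Local Open Scope ring_scope.

(* With K := U0 GK, the data identity X1 = A X0 + B U0 and X0 GK = I give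
   X1 GK = A + B K, so the LP constraint reads P S = S (A + B K).  For x with
   S x <= 1 and P >= 0 this yields S (A + B K) x = P S x <= P 1 <= lam 1, so
   (A + B K) x lies in l S for every l > lam.  Admissibility is a linear
   bound imposed at the vertices only; it holds on all of S because a
   continuous affine function attains its maximum over a compact set at an
   extreme point: among its maximisers, one of largest Euclidean norm is
   extreme by strict convexity of the squared norm. *)

Section ExtremeMaximum.
Variables (R : realType) (n : nat).
Implicit Types (x y z : 'cV[R]_n) (t : R).

Definition sqnorm x : R := \sum_i x i ord0 ^+ 2.

Lemma continuous_sqnorm : continuous sqnorm.
Proof.
apply: continuous_big => [|i _ x]; first exact: add_continuous.
by apply: continuousM; exact: coord_continuous.
Qed.

Lemma continuous_mulmx_coord (p : nat) (M : 'M[R]_(p, n)) i j :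
  continuous (fun x => (M *m x) i j).
Proof.
have -> : (fun x => (M *m x) i j) = fun x => \sum_k M i k * x k j.
  by apply: funext => x; rewrite mxE.
apply: continuous_big => [|k _ x]; first exact: add_continuous.
by apply: continuousM; [exact: cst_continuous | exact: coord_continuous].
Qed.

Lemma sqnorm_convex_gap x y t :
  t * sqnorm x + (1 - t) * sqnorm y - sqnorm (t *: x + (1 - t) *: y) =
  t * (1 - t) * sqnorm (x - y).
Proof.
rewrite /sqnorm !mulr_sumr -big_split -sumrB; apply: eq_bigr => i _.
by rewrite !mxE /=; ring.
Qed.

Lemma sqnorm_eq0 x : sqnorm x = 0 -> x = 0.
Proof.
move=> /psumr_eq0P x0; apply/matrixP => i j; rewrite (ord1 j) mxE.
by apply/eqP; rewrite -sqrf_eq0 x0 // => k _; exact: sqr_ge0.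
Qed.

Lemma sqnorm_ge0 x : 0 <= sqnorm x.
Proof. by apply: sumr_ge0 => i _; exact: sqr_ge0. Qed.

Lemma sqnorm_strictly_convex x y t : 0 < t < 1 ->
  sqnorm x <= sqnorm (t *: x + (1 - t) *: y) ->
  sqnorm y <= sqnorm (t *: x + (1 - t) *: y) -> x = y.
Proof.
move=> /andP[t0 t1] hx hy; apply/eqP; rewrite -subr_eq0; apply/eqP.
apply: sqnorm_eq0; have := sqnorm_convex_gap x y t.
have := sqnorm_ge0 (x - y); set d := sqnorm (x - y) => d0 gap.
have tt : 0 < t * (1 - t) by apply: mulr_gt0; lra.
by apply/eqP; rewrite eq_le d0 andbT -(pmulr_rle0 _ tt) -gap; nra.
Qed.

Lemma compact_affine_max_vertex (S : set 'cV[R]_n) (h : 'cV[R]_n -> R) :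
  compact S -> S !=set0 -> continuous h ->
  (forall y z t, h (t *: y + (1 - t) *: z) = t * h y + (1 - t) * h z) ->
  exists2 v, is_vertex S v & forall x, S x -> h x <= h v.
Proof.
move=> cS S0 ch hlin.
have [c Sc cmax] := compact_EVT_max S0 cS (continuous_subspaceT ch).
rewrite inE in Sc.
pose F := S `&` (h @^-1` [set h c]).
have cF : compact F.
  apply: compact_closedI => //.
  by move/continuous_closedP: ch; apply; exact: closed_eq.
have F0 : F !=set0 by exists c.
have [v vF vmax] :=
  compact_EVT_max F0 cF (continuous_subspaceT continuous_sqnorm).
rewrite inE in vF; case: vF => vS /= hv.
have hmax x : S x -> h x <= h c by move=> Sx; apply: cmax; rewrite inE.
exists v; last by move=> x /hmax; rewrite hv.
split => // y z t Sy Sz t01 vE.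
have [Fy Fz] : F y /\ F z.
  have := hmax _ Sy; have := hmax _ Sz; move: (t01) hv => /andP[t0 t1].
  by rewrite vE hlin /F /= => hc hz hy; split; split => //; nra.
by apply: (sqnorm_strictly_convex t01); rewrite -vE; apply: vmax; rewrite inE.
Qed.

Lemma compact_affine_le_vertices (S : set 'cV[R]_n) (h : 'cV[R]_n -> R) c :
  compact S -> continuous h ->
  (forall y z t, h (t *: y + (1 - t) *: z) = t * h y + (1 - t) * h z) ->
  (forall v, is_vertex S v -> h v <= c) ->
  forall x, S x -> h x <= c.
Proof.
move=> cS ch hlin hvert x Sx.
have [v /hvert hv vmax] := compact_affine_max_vertex cS (ex_intro _ x Sx) ch hlin.
exact: le_trans (vmax _ Sx) hv.
Qed.

End ExtremeMaximum.

Lemma mxle_trans (R : realType) q r (M N L : 'M[R]_(q, r)) :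
  mxle M N -> mxle N L -> mxle M L.
Proof. by move=> MN NL i j; exact: le_trans (MN i j) (NL i j). Qed.

Lemma mxle_mul2l (R : realType) q r s (P : 'M[R]_(q, r))
    (M N : 'M[R]_(r, s)) :
  mxle 0 P -> mxle M N -> mxle (P *m M) (P *m N).
Proof.
move=> P0 MN i j; rewrite !mxE; apply: ler_sum => k _.
by apply: ler_wpM2l => //; have := P0 i k; rewrite mxE.
Qed.

Section Polyhedra.
Variables (R : realType) (n p : nat) (Sm : 'M[R]_(p, n)).

Lemma polyset_image_le (P : 'M[R]_p) (F : 'M[R]_n) lam x :
  mxle 0 P -> mxle (P *m ones R p) (lam *: ones R p) -> P *m Sm = Sm *m F ->
  polyset Sm x -> mxle (Sm *m (F *m x)) (lam *: ones R p).
Proof.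
move=> P0 P1 PSF Sx; rewrite mulmxA -PSF -mulmxA.
exact: mxle_trans (mxle_mul2l P0 Sx) P1.
Qed.

Lemma scale_polyset l y :
  0 < l -> mxle (Sm *m y) (l *: ones R p) -> scale_set l (polyset Sm) y.
Proof.
move=> l0 Sy; exists (l^-1 *: y); last by rewrite scalerA mulfV ?gt_eqF ?scale1r.
move=> i j; have := Sy i j.
by rewrite -scalemxAr !mxE mulr1 ler_pdivrMl // mulr1.
Qed.

Lemma inf_scale_polyset_le lam y :
  0 <= lam -> mxle (Sm *m y) (lam *: ones R p) ->
  inf [set l : R | 0 <= l /\ scale_set l (polyset Sm) y] <= lam.
Proof.
move=> lam0 Sy; apply/ler_addgt0Pr => e e0.
apply: ge_inf; first by exists 0 => l [].
split; first lra.
apply: scale_polyset; first lra.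
by apply: (mxle_trans Sy) => i j; rewrite !mxE !mulr1 lerDl ltW.
Qed.

Lemma contractive_polyset (P : 'M[R]_p) (F : 'M[R]_n) lam :
  0 <= lam < 1 -> mxle 0 P -> mxle (P *m ones R p) (lam *: ones R p) ->
  P *m Sm = Sm *m F -> contractive (polyset Sm) F lam.
Proof.
move=> lam01 P0 P1 PSF; split => // x Sx.
apply: inf_scale_polyset_le; first by case/andP: lam01.
exact: polyset_image_le P0 P1 PSF Sx.
Qed.

Lemma admissible_polyset_vertices m q (Um : 'M[R]_(q, m)) (K : 'M[R]_(m, n)) :
  compact (polyset Sm) ->
  (forall s, is_vertex (polyset Sm) s -> mxle (Um *m K *m s) (ones R q)) ->
  admissible (polyset Sm) (polyset Um) K.
Proof.
move=> cS Kvert x Sx i j; rewrite mulmxA [ones _ _ _ _]mxE.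
apply: (compact_affine_le_vertices (h := fun y => (Um *m K *m y) i j) cS _ _ _ Sx).
- exact: continuous_mulmx_coord.
- by move=> y z t; rewrite mulmxDr -!scalemxAr !mxE.
- by move=> s /Kvert /(_ i j); rewrite [ones _ _ _ _]mxE.
Qed.

End Polyhedra.

Lemma data_mx_step (R : realType) n m T (A : 'M[R]_n) (B : 'M[R]_(n, m))
    (ud : nat -> 'cV[R]_m) (xd : nat -> 'cV[R]_n) :
  (forall k, (k < T)%N -> xd k.+1 = A *m xd k + B *m ud k) ->
  data_mx T xd 1 = A *m data_mx T xd 0 + B *m data_mx T ud 0.
Proof.
move=> dyn; apply/matrixP => i j; rewrite !mxE addn1 (dyn _ (ltn_ord j)) !mxE.
by congr (_ + _); apply: eq_bigr => k _; rewrite !mxE addn0.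
Qed.

Lemma data_gain_closed_loop (R : realType) n m T (A : 'M[R]_n)
    (B : 'M[R]_(n, m)) (U0 : 'M[R]_(m, T)) (X0 X1 : 'M[R]_(n, T))
    (G : 'M[R]_(T, n)) :
  X1 = A *m X0 + B *m U0 -> 1%:M = X0 *m G -> X1 *m G = A + B *m (U0 *m G).
Proof. by move=> -> X0G; rewrite mulmxDl -!mulmxA -X0G mulmx1. Qed.

Theorem corollary1 (R : realType) (n m ns nu T : nat)
    (A : 'M[R]_n) (B : 'M[R]_(n, m))
    (Sm : 'M[R]_(ns, n)) (Um : 'M[R]_(nu, m))
    (ud : nat -> 'cV[R]_m) (xd : nat -> 'cV[R]_n)
    (lam : R) (GK : 'M[R]_(T, n)) (P : 'M[R]_ns) :
  Cset (polyset Sm) ->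
  (forall k, (k < T)%N -> xd k.+1 = A *m xd k + B *m ud k) ->
  lp_optimal Sm Um (data_mx T ud 0) (data_mx T xd 0) (data_mx T xd 1)
    lam GK P ->
  contractive (polyset Sm) (A + B *m (data_mx T ud 0 *m GK)) lam /\
  admissible (polyset Sm) (polyset Um) (data_mx T ud 0 *m GK).
Proof.
move=> [_ [cS _]] dyn [[lam01 [P0 [P1 [PS [Pvert X0G]]]]] _].
have PF : P *m Sm = Sm *m (A + B *m (data_mx T ud 0 *m GK)).
  by rewrite PS -mulmxA (data_gain_closed_loop (data_mx_step dyn) X0G).
split; first exact: contractive_polyset lam01 P0 P1 PF.
by apply: admissible_polyset_vertices => // s /Pvert; rewrite mulmxA.
Qed.
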